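(* Let $K$ be an algebraically closed field of characteristic $0$ and $G=Q\ltimes N$ a finite group. Let $\mathcal{W}$ be an irreducible representation of $N$, $Q_1\leq Q$ a subgroup, $Q_2=\mathrm{Stab}_Q([\mathcal{W}])$ and $Q_3=Q_1\cap Q_2$, and assume $\mathcal{W}$ extends to a representation of $Q_2\ltimes N$; fix such an extension. Let $U$ be an irreducible representation of $Q_3$ and $V$ an irreducible representation of $Q_2$ (inflated to $Q_3\ltimes N$, resp. $Q_2\ltimes N$). Then $\widetilde U=\mathrm{Ind}_{Q_3\ltimes N}^{Q_1\ltimes N}(U\otimes\mathcal{W})$ is an irreducible representation of $Q_1\ltimes N$, $\widetilde V=\mathrm{Ind}_{Q_2\ltimes N}^{G}(V\otimes\mathcal{W})$ is an irreducible representation of $G$, and the map $$\mathrm{Hom}_{Q_3}(U,\mathrm{Res}^{Q_2}_{Q_3}V)\to\mathrm{Hom}_{Q_1\ltimes N}(\widetilde U,\mathrm{Res}^G_{Q_1\ltimes N}\widetilde V),\qquad T\mapsto\widetilde T,\ \ \widetilde T(g\otimes u\otimes w)=g\otimes T(u)\otimes w,$$ is an isomorphism. As a result, the $\widetilde U$-isotypic component of $\mathrm{Res}^G_{Q_1\ltimes N}\widetilde V$ equals $K(Q_1\ltimes N)\otimes_{K(Q_3\ltimes N)}(V_U\otimes\mathcal{W})\subseteq\widetilde V$, where $V_U$ is the $U$-isotypic component of $\mathrm{Res}^{Q_2}_{Q_3}V$.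
   Context: $Q$ acts on isomorphism classes of $N$-representations by twisting with conjugation, and $\mathrm{Stab}_Q([\mathcal{W}])$ is the stabilizer of the class of $\mathcal{W}$. Tensor products of representations carry the diagonal action. *)

From HB Require Import structures.
From mathcomp Require Import all_boot all_order all_algebra all_fingroup.
From mathcomp Require Import all_solvable all_field all_character.
Set Implicit Arguments.
Unset Strict Implicit.
Unset Printing Implicit Defensive.
Import GRing.Theory.
Local Open Scope ring_scope.
Local Open Scope group_scope.

(* Conventions.
   - A (finite-dimensional) representation of a subgroup H on a vector space
     V (a vectType) with carrier subspace M is given by an action
     act : gT -> V -> V, used only for x \in H and v \in M.
   - A matrix representation r : mx_representation F H n acts on COLUMN
     vectors 'cV_n by  v |-> r x *m v  (a left module).
   - Tensor product of 'cV_m and 'cV_n is modelled by 'M_(m,n), u (x) w =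
     u *m w^T; (r (x) s) x acts as X |-> r x *m X *m (s x)^T.
   - The induced module K G (x)_{K H} X is modelled by functions
     f : gT -> X; the elementary tensor g (x) x is [elem_ind H rho g x],
     the function y |-> rho (y^-1 g) x if y^-1 g \in H, 0 otherwise;
     G acts by (a . f)(y) = f (a^-1 y). *)

Section Defs.
Variables (F : fieldType) (gT : finGroupType).

Definition stable_sp (V : vectType F) (H : {set gT}) (act : gT -> V -> V)
    (M : {vspace V}) :=
  forall x v, x \in H -> v \in M -> act x v \in M.

Definition irr_mod (V : vectType F) (H : {set gT}) (act : gT -> V -> V)
    (M : {vspace V}) :=
  M != 0%VS /\
  forall M' : {vspace V}, (M' <= M)%VS -> stable_sp H act M' ->
    M' = 0%VS \/ M' = M.

Definition is_hom (V1 V2 : vectType F) (H : {set gT})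
    (act1 : gT -> V1 -> V1) (M1 : {vspace V1})
    (act2 : gT -> V2 -> V2) (M2 : {vspace V2}) (f : 'Hom(V1, V2)) :=
  (f @: M1 <= M2)%VS /\
  forall x v, x \in H -> v \in M1 -> f (act1 x v) = act2 x (f v).

Definition iso_mod (V1 V2 : vectType F) (H : {set gT})
    (act1 : gT -> V1 -> V1) (M1 : {vspace V1})
    (act2 : gT -> V2 -> V2) (M2 : {vspace V2}) :=
  exists f : 'Hom(V1, V2),
    [/\ is_hom H act1 M1 act2 M2 f, (f @: M1)%VS = M2
      & \dim (f @: M1) = \dim M1].

(* C is the (M0,act0)-isotypic component of (M,act): the sum of all
   submodules of M isomorphic to M0 (finite-dimensionality makes the sum
   a finite one). *)
Definition is_isotypic (V V0 : vectType F) (H : {set gT})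
    (act : gT -> V -> V) (M : {vspace V})
    (act0 : gT -> V0 -> V0) (M0 : {vspace V0}) (C : {vspace V}) :=
  (exists s : seq {vspace V},
      (forall X, X \in s ->
         [/\ (X <= M)%VS, stable_sp H act X & iso_mod H act X act0 M0])
      /\ C = (\sum_(X <- s) X)%VS)
  /\ (forall X : {vspace V}, (X <= M)%VS -> stable_sp H act X ->
        iso_mod H act X act0 M0 -> (X <= C)%VS).

Definition mxact n (r : gT -> 'M[F]_n) (x : gT) (v : 'cV[F]_n) : 'cV[F]_n :=
  r x *m v.

Definition mxrep_iso n (H : {set gT}) (r1 r2 : gT -> 'M[F]_n) :=
  exists2 B : 'M[F]_n, B \in unitmx & forall x, x \in H -> r1 x *m B = B *m r2 x.

(* tensor product (inflated U) (x) W for a group  Q' |x N  inside Q |x N: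
   x = q n acts through rU q and rW x *)
Definition tens_act (Q N : {set gT}) m n (rU : gT -> 'M[F]_m)
    (rW : gT -> 'M[F]_n) (x : gT) (X : 'M[F]_(m, n)) : 'M[F]_(m, n) :=
  rU (divgr Q N x) *m X *m (rW x)^T.

Definition tens_sp m n (M1 : {vspace 'cV[F]_m}) (M2 : {vspace 'cV[F]_n})
    : {vspace 'M[F]_(m, n)} :=
  <<[seq v *m w^T | v <- vbasis M1, w <- vbasis M2]>>%VS.

Definition elem_ind (V0 : vectType F) (H : {set gT}) (rho : gT -> V0 -> V0)
    (g : gT) (x : V0) : {ffun gT -> V0} :=
  [ffun y => if (y^-1 * g) \in H then rho (y^-1 * g) x else 0%R].

Definition ind_act (V0 : vectType F) (a : gT) (f : {ffun gT -> V0})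
    : {ffun gT -> V0} :=
  [ffun y => f (a^-1 * y)].

Definition ind_sp (V0 : vectType F) (H : {set gT}) (rho : gT -> V0 -> V0)
    (K : {set gT}) (M0 : {vspace V0}) : {vspace {ffun gT -> V0}} :=
  <<[seq elem_ind H rho g x | g <- enum K, x <- vbasis M0]>>%VS.

End Defs.

From HB Require Import structures.
From mathcomp Require Import all_boot all_order all_algebra all_fingroup.
From mathcomp Require Import all_solvable all_field all_character.
Import GRing.Theory.
Local Open Scope ring_scope.
Set Implicit Arguments.
Unset Strict Implicit.
Unset Printing Implicit Defensive.

(* A Q1 N-homomorphism S from Ind(U (x) W) to Ind(V (x) W) is determined by
   Phi := S (1 (x) -), a function on G.  Its value at y intertwines W with
   its twist W^y, tensored with Hom(U, V); by Schur's lemma it vanishes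
   unless W^y ~ W, i.e. unless y lies in the stabiliser Q2 N, and at y = 1 it
   is T (x) id for a Q3-homomorphism T.  Conversely, averaging over Q3 N turns
   every such T into a homomorphism T~.  Applied to endomorphisms this makes
   both induced modules have scalar commutants, hence (Maschke) irreducible;
   and a submodule of Ind(V (x) W) isomorphic to Ind(U (x) W) is the image of
   some T~, whose T maps U into the U-isotypic component of V. *)

Section LinearAlgebra.
Variable F : fieldType.

Lemma span_ind (V : vectType F) (P : V -> Prop) (s : seq V) :
  P 0 -> (forall k u v, P u -> P v -> P (k *: u + v)) ->
  (forall x, x \in s -> P x) -> forall v, v \in <<s>>%VS -> P v.
Proof.
move=> P0 PP; elim: s => [|x s IHs] Ps v.
  by rewrite span_nil memv0 => /eqP->.
rewrite span_cons => /memv_addP[u /vlineP[k ->] [w ws ->]].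
apply: PP; first by apply: Ps; rewrite mem_head.
by apply: IHs => // z zs; apply: Ps; rewrite inE zs orbT.
Qed.

Lemma outer_prod_ind m n (P : 'M[F]_(m, n) -> Prop) :
  P 0 -> (forall k X Y, P X -> P Y -> P (k *: X + Y)) ->
  (forall (u : 'cV_m) (w : 'cV_n), P (u *m w^T)) -> forall X, P X.
Proof.
move=> P0 PP Pout X; rewrite (matrix_sum_delta X).
have PD Y Z : P Y -> P Z -> P (Y + Z).
  by move=> PY PZ; rewrite -[Y]scale1r; apply: PP.
apply: big_ind => // i _; apply: big_ind => // j _.
rewrite -[_ *: _]addr0; apply: PP => //.
have -> : delta_mx i j = (delta_mx i 0 : 'cV[F]_m) *m (delta_mx j 0 : 'cV[F]_n)^T.
  by rewrite trmx_delta mul_delta_mx.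
exact: Pout.
Qed.

Lemma mulmx_extr m n p (A B : 'M[F]_(m, n)) : (0 < p)%N ->
  (forall Y : 'M[F]_(n, p), A *m Y = B *m Y) -> A = B.
Proof.
move=> p_gt0 eqAB; pose j0 := Ordinal p_gt0.
apply/matrixP => i j.
have := congr1 (fun M : 'M[F]_(m, p) => M i j0) (eqAB (delta_mx j j0)).
by rewrite -(mul_delta_mx (0 : 'I_1)) !mulmxA -!colE !mxE !big_ord1 !mxE !eqxx !mulr1.
Qed.

Lemma lfun_cV_mulmx m n (f : 'Hom('cV[F]_m, 'cV[F]_n)) :
  exists T : 'M_(n, m), forall u, f u = T *m u.
Proof.
exists (\matrix_(i, j) f (delta_mx j 0) i 0) => u.
rewrite {1}(matrix_sum_delta u) linear_sum; apply/matrixP => i k.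
rewrite ord1 summxE !mxE; apply: eq_bigr => j _.
by rewrite big_ord1 linearZ !mxE mulrC.
Qed.

Section MatrixSlices.
Variables (a b c : nat) (psi : 'M[F]_(a, b) -> 'M[F]_(c, b)).
Hypothesis psi_linear : linear psi.
HB.instance Definition _ := GRing.isLinear.Build F _ _ *:%R psi psi_linear.

(* Viewing psi as an element of Hom(F^a, F^c) (x) End(F^b), [mx_slice i r] is
   its End(F^b) component along the matrix unit e_r e_i^T. *)
Definition mx_slice i r : 'M[F]_b := \matrix_(k, j) psi (delta_mx i j) r k.

Lemma delta_mx_mul_tr m (i : 'I_m) j (M : 'M[F]_b) :
  delta_mx i j *m M^T = \sum_(l < b) M l j *: delta_mx i l.
Proof.
apply/matrixP => p q; rewrite !mxE summxE.
rewrite (bigD1 j) //= big1 => [|l /negbTE lj]; last by rewrite !mxE lj andbF mul0r.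
rewrite (bigD1 q) //= [X in _ = _ + X]big1 => [|l /negbTE lq]; last first.
  by rewrite !mxE [q == l]eq_sym lq andbF mulr0.
by rewrite !mxE !eqxx !andbT !addr0 mulrC.
Qed.

Lemma mx_slice_intertw (R1 R2 : 'M[F]_b) i r :
  (forall X, psi (X *m R1^T) = psi X *m R2^T) ->
  mx_slice i r *m R1 = R2 *m mx_slice i r.
Proof.
move=> psiR; apply/matrixP => k j; rewrite !mxE.
have := congr1 (fun M : 'M[F]_(c, b) => M r k) (psiR (delta_mx i j)).
rewrite /= delta_mx_mul_tr linear_sum summxE mxE => e.
transitivity (\sum_l psi (R1 l j *: delta_mx i l) r k).
  by apply: eq_bigr => l _; rewrite linearZ !mxE mulrC.
by rewrite e; apply: eq_bigr => l _; rewrite !mxE mulrC.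
Qed.

Lemma mx_slice_scalar (T : 'M[F]_(c, a)) :
  (forall i r, mx_slice i r = (T r i)%:M) -> forall X, psi X = T *m X.
Proof.
move=> psiT X; apply/matrixP => r k.
have psiE i j : psi (delta_mx i j) r k = T r i *+ (k == j).
  by have := congr1 (fun M : 'M_b => M k j) (psiT i r); rewrite !mxE.
rewrite {1}(matrix_sum_delta X) linear_sum summxE !mxE; apply: eq_bigr => i _.
rewrite linear_sum summxE (bigD1 k) //= big1 => [|j /negbTE jk]; last first.
  by rewrite linearZ !mxE psiE eq_sym jk mulr0.
by rewrite linearZ !mxE psiE eqxx addr0 mulr1n mulrC.
Qed.

End MatrixSlices.
End LinearAlgebra.

Section Schur.
Variables (F : fieldType) (gT : finGroupType) (n : nat).
Variables (H : {set gT}) (r : gT -> 'M[F]_n).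
Hypothesis r_irr : irr_mod H (mxact r) fullv.

Lemma irr_mod_dim_gt0 : (0 < n)%N.
Proof.
case: r_irr => nz _; rewrite lt0n; move: nz; apply: contraNneq => n0.
by rewrite -dimv_eq0 dimvf dim_matrix n0.
Qed.

Lemma irr_mod_Schur (R : gT -> 'M[F]_n) (L : 'M[F]_n) :
  (forall x, x \in H -> L *m r x = R x *m L) -> L = 0 \/ L \in unitmx.
Proof.
move=> hL; case: r_irr => _ r_simple.
pose K := lker (linfun (mulmx L : 'cV[F]_n -> 'cV[F]_n)).
have memK v : (v \in K) = (L *m v == 0) by rewrite memv_ker lfunE.
have K_stable : stable_sp H (mxact r) K.
  move=> x v xH; rewrite !memK /mxact mulmxA hL // -mulmxA => /eqP->.
  by rewrite mulmx0.
case: (r_simple K (subvf K) K_stable) => [K0|Kfull].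
  right; rewrite unitmxE unitfE -det_tr; apply/negP => /det0P[v nz_v vL].
  move/negP: nz_v; apply; rewrite -trmx_eq0 -memv0 -K0 memK.
  by rewrite -[L]trmxK -trmx_mul vL trmx0.
left; apply/matrixP => i j; rewrite mxE.
have : delta_mx j 0 \in K by rewrite Kfull memvf.
by rewrite memK -colE => /eqP/matrixP/(_ i 0); rewrite !mxE.
Qed.

End Schur.

Lemma irr_mod_Schur_scalar (F : closedFieldType) (gT : finGroupType) n
    (H : {set gT}) (r : gT -> 'M[F]_n) (L : 'M[F]_n) :
  irr_mod H (mxact r) fullv -> (forall x, x \in H -> L *m r x = r x *m L) ->
  exists l, L = l%:M.
Proof.
move=> r_irr hL; have := irr_mod_dim_gt0 r_irr; case: n r L r_irr hL => // n r L r_irr hL _.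
have : size (char_poly L) != 1 by rewrite size_char_poly.
case/closed_rootP => l; rewrite -eigenvalue_root_char => /eigenvalueP[v vL nz_v].
exists l; have [x xH|/eqP|Ll_unit] := irr_mod_Schur (R := r) (L := L - l%:M) r_irr.
- by rewrite mulmxBl mulmxBr hL // scalar_mxC.
- by rewrite subr_eq0 => /eqP.
exfalso; move: Ll_unit; rewrite unitmxE unitfE => /negP; apply.
by apply/det0P; exists v => //; rewrite mulmxBr vL mul_mx_scalar subrr.
Qed.

Section InducedAction.
Variables (F : fieldType) (gT : finGroupType) (V0 : vectType F).

Lemma ind_act_linear a : linear (@ind_act F gT V0 a).
Proof. by move=> k f f'; apply/ffunP => y; rewrite !ffunE. Qed.

Lemma ind_actM a a' (f : {ffun gT -> V0}) :
  ind_act a (ind_act a' f) = ind_act (a * a')%g f.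
Proof. by apply/ffunP => y; rewrite !ffunE invMg mulgA. Qed.

Lemma ind_act1 (f : {ffun gT -> V0}) : ind_act 1%g f = f.
Proof. by apply/ffunP => y; rewrite !ffunE invg1 mul1g. Qed.

Lemma ind_act_elem (H : {set gT}) rho a g (x : V0) :
  ind_act a (elem_ind H rho g x) = elem_ind H rho (a * g)%g x.
Proof. by apply/ffunP => y; rewrite !ffunE invMg invgK mulgA. Qed.

End InducedAction.

HB.instance Definition _ (F : fieldType) (gT : finGroupType) (V0 : vectType F) a :=
  GRing.isLinear.Build F _ _ *:%R (@ind_act F gT V0 a) (ind_act_linear a).

Section InducedModule.
Variables (F : fieldType) (gT : finGroupType) (V0 : vectType F).
Variables (H : {group gT}) (rho : gT -> V0 -> V0).
Hypothesis rho_linear : forall x, linear (rho x).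
HB.instance Definition _ x := GRing.isLinear.Build F _ _ *:%R (rho x) (rho_linear x).

Lemma elem_ind_linear g : linear (elem_ind H rho g).
Proof.
move=> k x x'; apply/ffunP => y; rewrite !ffunE.
by case: ifP => _; rewrite ?linearP ?scaler0 ?addr0.
Qed.

Lemma elem_ind0 g : elem_ind H rho g 0 = 0.
Proof. by apply/ffunP => y; rewrite !ffunE linear0; case: ifP. Qed.

Lemma elem_indD g x x' :
  elem_ind H rho g (x + x') = elem_ind H rho g x + elem_ind H rho g x'.
Proof. by have := elem_ind_linear g 1 x x'; rewrite !scale1r. Qed.

Lemma ind_sp_ind (K : {set gT}) (M0 : {vspace V0}) (P : {ffun gT -> V0} -> Prop) :
  P 0 -> (forall k f f', P f -> P f' -> P (k *: f + f')) ->
  (forall g x, g \in K -> x \in M0 -> P (elem_ind H rho g x)) ->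
  forall f, f \in ind_sp H rho K M0 -> P f.
Proof.
move=> P0 PP Pelem; apply: span_ind => // _ /allpairsP[[g x] /= [gK xM ->]].
by apply: Pelem; rewrite -?(mem_enum K) ?vbasis_mem.
Qed.

Lemma mem_ind_sp (K : {set gT}) (M0 : {vspace V0}) g x :
  g \in K -> x \in M0 -> elem_ind H rho g x \in ind_sp H rho K M0.
Proof.
move=> gK; move: x; rewrite -{1}(span_basis (vbasisP M0)); apply: span_ind.
- by rewrite elem_ind0 mem0v.
- by move=> k x x' Px Px'; rewrite elem_ind_linear memvD ?memvZ.
move=> x xb; apply/memv_span/allpairsP.
by exists (g, x); split; rewrite ?mem_enum.
Qed.

Lemma ind_sp_stable (K : {group gT}) (M0 : {vspace V0}) :
  stable_sp K (@ind_act F gT V0) (ind_sp H rho K M0).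
Proof.
move=> a f aK; move: f; apply: ind_sp_ind => [|k f f' Pf Pf'|g x gK xM].
- by rewrite linear0 mem0v.
- by rewrite linearP memvD ?memvZ.
- by rewrite ind_act_elem mem_ind_sp ?groupM.
Qed.

Lemma ind_spS (K K' : {set gT}) (M0 M0' : {vspace V0}) :
  K \subset K' -> (M0 <= M0')%VS -> (ind_sp H rho K M0 <= ind_sp H rho K' M0')%VS.
Proof.
move=> sKK' sMM'; apply/subvP; apply: ind_sp_ind => [|k f f' Pf Pf'|g x gK xM].
- exact: mem0v.
- by rewrite memvD ?memvZ.
- by rewrite mem_ind_sp ?(subsetP sKK') ?(subvP sMM').
Qed.

Lemma ind_sp0 (K : {set gT}) : ind_sp H rho K 0 = 0%VS.
Proof.
apply/eqP; rewrite -subv0; apply/subvP; apply: ind_sp_ind => [|k f f' Pf Pf'|g x _].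
- exact: mem0v.
- by rewrite memvD ?memvZ.
- by rewrite memv0 => /eqP->; rewrite elem_ind0 mem0v.
Qed.

Lemma ind_spD (K : {set gT}) (M1 M2 : {vspace V0}) :
  ind_sp H rho K (M1 + M2) = (ind_sp H rho K M1 + ind_sp H rho K M2)%VS.
Proof.
apply/eqP; rewrite eqEsubv subv_add !ind_spS ?subxx ?addvSl ?addvSr ?andbT //.
apply/subvP; apply: ind_sp_ind => [|k f f' Pf Pf'|g _ gK /memv_addP[x1 x1M [x2 x2M ->]]].
- exact: mem0v.
- by rewrite memvD ?memvZ.
- by rewrite elem_indD memv_add ?mem_ind_sp.
Qed.

Lemma ind_sp_neq0 (K : {group gT}) (M0 : {vspace V0}) x :
  rho 1%g x = x -> x \in M0 -> x != 0 -> ind_sp H rho K M0 != 0%VS.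
Proof.
move=> rho1x xM0; apply: contraNneq => I0.
have := mem_ind_sp (group1 K) xM0; rewrite I0 memv0 => /eqP/ffunP/(_ 1%g).
by rewrite !ffunE mulg1 invg1 group1 rho1x => ->.
Qed.

Lemma ind_sp_out (K : {group gT}) (M0 : {vspace V0}) f y :
  H \subset K -> f \in ind_sp H rho K M0 -> y \notin K -> f y = 0.
Proof.
move=> sHK fI yK; move: f fI; apply: ind_sp_ind => [|k f f' Pf Pf'|g x gK _].
- by rewrite ffunE.
- by rewrite !ffunE Pf Pf' scaler0 addr0.
rewrite ffunE; case: ifP => // /(subsetP sHK); rewrite groupMr ?groupV //.
by rewrite (negbTE yK).
Qed.

Hypothesis rhoM : {in H &, forall h1 h2 x, rho (h1 * h2)%g x = rho h1 (rho h2 x)}.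

Lemma elem_ind_mulr g h x :
  h \in H -> elem_ind H rho g (rho h x) = elem_ind H rho (g * h)%g x.
Proof.
move=> hH; apply/ffunP => y; rewrite !ffunE mulgA (groupMr _ hH).
by case: ifP => // yg; rewrite [RHS]rhoM.
Qed.

Lemma ind_sp_mulr (K : {set gT}) (M0 : {vspace V0}) f y k :
  f \in ind_sp H rho K M0 -> k \in H -> f (y * k)%g = rho k^-1%g (f y).
Proof.
move=> fI kH; move: f fI; apply: ind_sp_ind => [|c f f' Pf Pf'|g x _ _].
- by rewrite !ffunE linear0.
- by rewrite !ffunE Pf Pf' linearP.
rewrite !ffunE invMg -mulgA groupMl ?groupV //.
by case: ifP => yg; rewrite ?linear0 // rhoM ?groupV.
Qed.

End InducedModule.

Definition induced_by (F : fieldType) (gT : finGroupType) (A B C : {set gT})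
    a b c (tU : gT -> 'M[F]_(a, b) -> 'M[F]_(a, b))
    (tV : gT -> 'M[F]_(c, b) -> 'M[F]_(c, b)) (T : 'M[F]_(c, a))
    (S : 'Hom({ffun gT -> 'M[F]_(a, b)}, {ffun gT -> 'M[F]_(c, b)})) :=
  forall g X, g \in A -> S (elem_ind B tU g X) = elem_ind C tV g (T *m X).

Section HomOfMx.
Variables (F : fieldType) (gT : finGroupType) (A B C K : {group gT}) (a b c : nat).
Variables (tU : gT -> 'M[F]_(a, b) -> 'M[F]_(a, b)).
Variables (tV : gT -> 'M[F]_(c, b) -> 'M[F]_(c, b)).
Hypotheses (sBC : B \subset C) (sAK : A \subset K).
Hypothesis tV_linear : forall x, linear (tV x).
Hypothesis tVM : {in C &, forall h1 h2 X, tV (h1 * h2)%g X = tV h1 (tV h2 X)}.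
Hypothesis B_unit : (#|B|%:R : F) != 0.
Variable T : 'M[F]_(c, a).
Hypothesis T_hom : forall k X, k \in B -> T *m tU k X = tV k (T *m X).
HB.instance Definition _ x := GRing.isLinear.Build F _ _ *:%R (tV x) (tV_linear x).

(* On g (x) X only the |B| points h of g B contribute, each with the value
   (g (x) T X)(y); averaging avoids choosing coset representatives. *)
Definition ind_hom_avg (f : {ffun gT -> 'M[F]_(a, b)}) : {ffun gT -> 'M[F]_(c, b)} :=
  [ffun y => #|B|%:R^-1 *: \sum_h
     (if (h^-1 * y)%g \in C then tV (y^-1 * h)%g (T *m f h) else 0)].

Lemma ind_hom_avg_linear : linear ind_hom_avg.
Proof.
move=> k f f'; apply/ffunP => y; rewrite !ffunE scalerA mulrC -scalerA -scalerDr.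
congr (_ *: _); rewrite scaler_sumr -big_split; apply: eq_bigr => h _ /=.
by case: ifP; rewrite ?scaler0 ?addr0 // !ffunE mulmxDr -scalemxAr linearP.
Qed.
HB.instance Definition _ :=
  GRing.isLinear.Build F _ _ *:%R ind_hom_avg ind_hom_avg_linear.

Lemma ind_hom_avg_act x f : ind_hom_avg (ind_act x f) = ind_act x (ind_hom_avg f).
Proof.
apply/ffunP => y; rewrite !ffunE; congr (_ *: _).
rewrite (reindex_inj (mulgI x)) /=; apply: eq_bigr => h _.
by rewrite !ffunE invMg !mulgA mulVg mul1g invMg invgK.
Qed.

Lemma ind_hom_avg_elem g X :
  ind_hom_avg (elem_ind B tU g X) = elem_ind C tV g (T *m X).
Proof.
apply/ffunP => y; rewrite !ffunE.
have inj_gV : injective (fun k => g * k^-1)%g by move=> k1 k2 /mulgI/invg_inj.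
rewrite (reindex_inj inj_gV) /=.
pose v := if (y^-1 * g)%g \in C then tV (y^-1 * g)%g (T *m X) else 0.
transitivity (#|B|%:R^-1 *: \sum_(k in B) v).
  congr (_ *: _); rewrite [RHS]big_mkcond; apply: eq_bigr => k _.
  rewrite !ffunE !invMg invgK mulgKV.
  have yC : ((k * g^-1 * y)%g \in C) = ((y^-1 * (g * k^-1))%g \in C).
    by rewrite -groupV !invMg !invgK !mulgA.
  case kB: (k \in B); last by case: ifP; rewrite ?mulmx0 ?linear0.
  have kC := subsetP sBC _ kB; rewrite yC mulgA groupMr ?groupV // /v.
  by case: ifP => // yg; rewrite T_hom // -tVM ?mulgKV // groupMr // groupV.
rewrite sumr_const -scaler_nat scalerA mulVf // scale1r /v.
by rewrite -[(y^-1 * g)%g]invgK groupV invMg invgK.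
Qed.

Lemma ind_hom_of_mx : exists S,
  is_hom A (@ind_act F gT _) (ind_sp B tU A fullv) (@ind_act F gT _) (ind_sp C tV K fullv) S
  /\ induced_by A B C tU tV T S.
Proof.
exists (linfun ind_hom_avg); split; last by move=> g X _; rewrite lfunE /= ind_hom_avg_elem.
split; last by move=> x f _ _; rewrite !lfunE /= ind_hom_avg_act.
apply/subvP => _ /memv_imgP[f fU ->]; rewrite lfunE /=; move: f fU.
apply: ind_sp_ind => [|k f f' Pf Pf'|g x gA _].
- by rewrite linear0 mem0v.
- by rewrite linearP memvD ?memvZ.
- by rewrite ind_hom_avg_elem mem_ind_sp ?memvf ?(subsetP sAK).
Qed.

End HomOfMx.

Section MxOfHom.
Variables (F : closedFieldType) (gT : finGroupType).
Variables (N A B C K : {group gT}) (a b c : nat).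
Variables (tU : gT -> 'M[F]_(a, b) -> 'M[F]_(a, b)).
Variables (tV : gT -> 'M[F]_(c, b) -> 'M[F]_(c, b)).
Variable rW : gT -> 'M[F]_b.
Hypothesis rW_irr : irr_mod N (mxact rW) fullv.
Hypotheses (sNB : N \subset B) (sBA : B \subset A) (sBC : B \subset C).
Hypotheses (sCK : C \subset K) (nNK : K \subset 'N(N)%g).
Hypotheses (tU_linear : forall x, linear (tU x)) (tV_linear : forall x, linear (tV x)).
Hypothesis tUM : {in B &, forall h1 h2 X, tU (h1 * h2)%g X = tU h1 (tU h2 X)}.
Hypothesis tVM : {in C &, forall h1 h2 X, tV (h1 * h2)%g X = tV h1 (tV h2 X)}.
Hypothesis tUN : {in N, forall n X, tU n X = X *m (rW n)^T}.
Hypothesis tVN : {in N, forall n X, tV n X = X *m (rW n)^T}.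
Hypothesis C_stab : forall y L, y \in K -> L \in unitmx ->
  (forall n, n \in N -> L *m rW n = rW (n ^ y)%g *m L) -> y \in C.

Variable S : 'Hom({ffun gT -> 'M[F]_(a, b)}, {ffun gT -> 'M[F]_(c, b)}).
Hypothesis S_hom :
  is_hom A (@ind_act F gT _) (ind_sp B tU A fullv) (@ind_act F gT _) (ind_sp C tV K fullv) S.

Let Vt := ind_sp C tV K fullv.
Let hom_at y X := S (elem_ind B tU 1%g X) y.

Lemma hom_at_linear y : linear (hom_at y).
Proof. by move=> k X X'; rewrite /hom_at (elem_ind_linear B tU_linear) linearP !ffunE. Qed.

Lemma hom_at_in X : S (elem_ind B tU 1%g X) \in Vt.
Proof. by case: S_hom => sSV _; rewrite (subvP sSV) ?memv_img ?mem_ind_sp ?memvf. Qed.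

Lemma hom_at_mulr y h X : h \in B -> y \in K ->
  hom_at y (tU h X) = hom_at (h^-1 * y)%g X.
Proof.
move=> hB yK; case: S_hom => _ S_act; rewrite /hom_at elem_ind_mulr //.
rewrite mul1g -[h in elem_ind _ _ h]mulg1 -ind_act_elem.
by rewrite S_act ?(subsetP sBA) ?mem_ind_sp ?memvf // ffunE.
Qed.

Lemma hom_at_N y n X : y \in K -> n \in N ->
  hom_at y (X *m (rW n)^T) = hom_at y X *m (rW (n ^ y)%g)^T.
Proof.
move=> yK nN; have nyN : (n ^ y)%g \in N by rewrite memJ_norm ?(subsetP nNK).
rewrite -tUN // hom_at_mulr ?(subsetP sNB) //.
have -> : (n^-1 * y = y * (n ^ y)^-1)%g by rewrite -conjVg conjgE !mulgA mulgV mul1g.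
have sNC := subset_trans sNB sBC.
rewrite /hom_at (ind_sp_mulr tV_linear tVM y (hom_at_in X)) ?groupV ?(subsetP sNC) //.
by rewrite invgK tVN.
Qed.

Lemma hom_at_slice_intertw y i r : y \in K -> forall n, n \in N ->
  mx_slice (hom_at y) i r *m rW n = rW (n ^ y)%g *m mx_slice (hom_at y) i r.
Proof.
by move=> yK n nN; apply: (mx_slice_intertw (hom_at_linear y)) => X; apply: hom_at_N.
Qed.

(* By Schur's lemma a nonzero slice would be invertible, i.e. W^y ~ W. *)
Lemma hom_at_out y X : y \in K -> y \notin C -> hom_at y X = 0.
Proof.
move=> yK yC; rewrite (mx_slice_scalar (hom_at_linear y) (T := 0)) ?mul0mx // => i r.
rewrite mxE raddf0.
have [//|slice_unit] := irr_mod_Schur rW_irr (hom_at_slice_intertw i r yK).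
by rewrite (C_stab yK slice_unit (hom_at_slice_intertw i r yK)) in yC.
Qed.

Lemma hom_at1 : exists T, forall X, hom_at 1%g X = T *m X.
Proof.
pose j0 := Ordinal (irr_mod_dim_gt0 rW_irr).
exists (\matrix_(r, i) mx_slice (hom_at 1%g) i r j0 j0).
apply: (mx_slice_scalar (hom_at_linear 1%g)) => i r.
have [n nN|l slice_l] := irr_mod_Schur_scalar rW_irr (L := mx_slice (hom_at 1%g) i r).
  by rewrite (hom_at_slice_intertw i r (group1 K)) ?conjg1.
by rewrite slice_l [in RHS]mxE slice_l mxE eqxx mulr1n.
Qed.

Lemma hom_elem_ind1 T X : (forall X, hom_at 1%g X = T *m X) ->
  S (elem_ind B tU 1%g X) = elem_ind C tV 1%g (T *m X).
Proof.
move=> hom_at1T; apply/ffunP => y; rewrite ffunE mulg1.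
case: ifPn => [yVC|yVC].
  have yC : y \in C by rewrite -groupV.
  have -> : y = (1 * y)%g by rewrite mul1g.
  rewrite (ind_sp_mulr tV_linear tVM 1%g (hom_at_in X) yC).
  by rewrite invMg invg1 mulg1 -hom_at1T.
have yC : y \notin C by rewrite -groupV.
have [yK|yK] := boolP (y \in K); first exact: hom_at_out.
exact: ind_sp_out sCK (hom_at_in X) yK.
Qed.

Lemma mx_of_ind_hom : exists T,
  (forall k X, k \in B -> T *m tU k X = tV k (T *m X)) /\ induced_by A B C tU tV T S.
Proof.
have [T hom_at1T] := hom_at1; exists T; split => [k X kB | g X gA].
  have kVC : k^-1%g \in C by rewrite groupV (subsetP sBC).
  rewrite -!hom_at1T hom_at_mulr // mulg1 -[k^-1%g]mul1g /hom_at.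
  by rewrite (ind_sp_mulr tV_linear tVM 1%g (hom_at_in X) kVC) invgK.
case: S_hom => _ S_act.
have -> : elem_ind B tU g X = ind_act g (elem_ind B tU 1%g X) by rewrite ind_act_elem mulg1.
by rewrite S_act ?mem_ind_sp ?memvf // (hom_elem_ind1 _ hom_at1T) ind_act_elem mulg1.
Qed.

End MxOfHom.

Section AveragedProjection.
Variables (F : fieldType) (gT : finGroupType) (V0 : vectType F) (H : {group gT}).
Variable M : {vspace {ffun gT -> V0}}.

Definition avg_proj (f : {ffun gT -> V0}) :=
  #|H|%:R^-1 *: \sum_(h in H) ind_act h (projv M (ind_act h^-1 f)).

Lemma avg_proj_linear : linear avg_proj.
Proof.
move=> k f f'; rewrite /avg_proj scalerA mulrC -scalerA -scalerDr; congr (_ *: _).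
by rewrite scaler_sumr -big_split; apply: eq_bigr => h _; rewrite !linearP.
Qed.
HB.instance Definition _ := GRing.isLinear.Build F _ _ *:%R avg_proj avg_proj_linear.

Hypothesis M_stable : stable_sp H (@ind_act F gT V0) M.

Lemma avg_proj_in f : avg_proj f \in M.
Proof. by rewrite memvZ // memv_suml // => h hH; rewrite M_stable ?memv_proj. Qed.

Lemma avg_proj_id f : (#|H|%:R : F) != 0 -> f \in M -> avg_proj f = f.
Proof.
move=> H_unit fM; rewrite /avg_proj (eq_bigr (fun=> f)) => [|h hH].
  by rewrite sumr_const -scaler_nat scalerA mulVf // scale1r.
by rewrite projv_id ?ind_actM ?mulgV ?ind_act1 // M_stable ?groupV.
Qed.

Lemma avg_proj_act x f : x \in H -> avg_proj (ind_act x f) = ind_act x (avg_proj f).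
Proof.
move=> xH; rewrite /avg_proj linearZ /=; congr (_ *: _); rewrite linear_sum.
rewrite !(big_mkcond (fun h => h \in H)) (reindex_inj (mulgI x)) /=.
apply: eq_bigr => h _; rewrite groupMl //; case: ifP => // _.
by rewrite !ind_actM invMg -mulgA mulVg mulg1.
Qed.

End AveragedProjection.

(* Maschke's averaging trick turns any submodule into the image of an
   equivariant projection, which must then be scalar. *)
Lemma irr_mod_of_End_scalar (F : fieldType) (gT : finGroupType) (V0 : vectType F)
    (H : {group gT}) (M : {vspace {ffun gT -> V0}}) :
  (#|H|%:R : F) != 0 -> M != 0%VS -> stable_sp H (@ind_act F gT V0) M ->
  (forall S : 'End({ffun gT -> V0}),
     is_hom H (@ind_act F gT V0) M (@ind_act F gT V0) M S ->
     exists l, forall f, f \in M -> S f = l *: f) ->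
  irr_mod H (@ind_act F gT V0) M.
Proof.
move=> H_unit M_neq0 M_stable End_scalar; split => // M' sM'M M'_stable.
pose P := linfun (avg_proj H M').
have [l Pl] : exists l, forall f, f \in M -> P f = l *: f.
  apply: End_scalar; split => [|x f xH _].
    by apply/subvP => _ /memv_imgP[f _ ->]; rewrite lfunE (subvP sM'M) ?avg_proj_in.
  by rewrite !lfunE /= avg_proj_act.
have [->|M'_neq0] := eqVneq M' 0%VS; [by left | right].
have l1 : l = 1.
  have f0M' := memv_pick M'; have f0_neq0 : vpick M' != 0 by rewrite vpick0.
  have := Pl _ (subvP sM'M _ f0M'); rewrite lfunE /= avg_proj_id // => /eqP.
  rewrite -subr_eq0 -{1}[vpick M']scale1r -scalerBl scaler_eq0 (negbTE f0_neq0) orbF.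
  by rewrite subr_eq0 eq_sym => /eqP.
apply/eqP; rewrite eqEsubv sM'M; apply/subvP => f fM.
by rewrite -[f]scale1r -l1 -Pl // lfunE /= avg_proj_in.
Qed.

Section ModuleIso.
Variables (F : fieldType) (gT : finGroupType) (V1 V2 : vectType F) (H : {set gT}).
Variables (act1 : gT -> V1 -> V1) (M1 : {vspace V1}).
Variables (act2 : gT -> V2 -> V2) (M2 : {vspace V2}).

Lemma iso_mod_sym :
  stable_sp H act1 M1 -> iso_mod H act1 M1 act2 M2 -> iso_mod H act2 M2 act1 M1.
Proof.
move=> M1_stable [f [[sfM hf] fM1 dimf]].
have ker0 : (M1 :&: lker f = 0)%VS.
  have := limg_ker_dim f M1; rewrite dimf => e.
  by apply/eqP; rewrite -dimv_eq0 -(eqn_add2r (\dim M1)) e add0n.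
pose g := (projv M1 \o (f \o projv M1)^-1)%VF.
have gM1 y : g y \in M1 by rewrite comp_lfunE memv_proj.
have fg y : y \in M2 -> f (g y) = y.
  rewrite -fM1 => /memv_imgP[x xM ->].
  have fx_im : f x \in limg (f \o projv M1)%VF.
    by apply/memv_imgP; exists x; rewrite ?memvf // comp_lfunE projv_id.
  by rewrite comp_lfunE -[f (projv _ _)]comp_lfunE limg_lfunVK.
have gf x : x \in M1 -> g (f x) = x.
  move=> xM; have e : f (g (f x)) = f x by rewrite fg // -fM1 memv_img.
  apply/eqP; rewrite -subr_eq0 -memv0 -ker0 memv_cap memvB ?gM1 //=.
  by rewrite memv_ker linearB /= e subrr.
have gM2 : (g @: M2)%VS = M1.
  apply/eqP; rewrite eqEsubv; apply/andP; split.
    by apply/subvP => _ /memv_imgP[y _ ->].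
  by apply/subvP => x xM; rewrite -(gf x xM) memv_img // -fM1 memv_img.
exists g; split => //; last by rewrite gM2 -dimf fM1.
split=> [|x y xH]; first by rewrite gM2.
by rewrite -fM1 => /memv_imgP[z zM ->]; rewrite -hf // !gf // M1_stable.
Qed.

Lemma irr_mod_hom_iso (f : 'Hom(V1, V2)) :
  stable_sp H act1 M1 -> irr_mod H act1 M1 -> {in H, forall x, act2 x 0 = 0} ->
  is_hom H act1 M1 act2 M2 f -> (f @: M1 != 0)%VS ->
  iso_mod H act1 M1 act2 (f @: M1).
Proof.
move=> M1_stable [_ M1_simple] act2_0 [_ hf] fM1_neq0.
have ker_stable : stable_sp H act1 (M1 :&: lker f)%VS.
  move=> x v xH /memv_capP[vM]; rewrite memv_ker => /eqP fv0.
  by rewrite memv_cap M1_stable // memv_ker hf // fv0 act2_0 ?eqxx.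
have [ker0|kerM1] := M1_simple _ (capvSl M1 (lker f)) ker_stable.
  by exists f; split; [split | | exact: limg_dim_eq].
by move: fM1_neq0; rewrite -lkerE -kerM1 capvSr.
Qed.

End ModuleIso.

Lemma mxhom_in_isotypic (F : fieldType) (gT : finGroupType) (H : {set gT}) m n
    (r1 : gT -> 'M[F]_m) (r2 : gT -> 'M[F]_n) (C : {vspace 'cV[F]_n})
    (T : 'M[F]_(n, m)) :
  irr_mod H (mxact r1) fullv -> is_isotypic H (mxact r2) fullv (mxact r1) fullv C ->
  {in H, forall x, T *m r1 x = r2 x *m T} -> forall u, T *m u \in C.
Proof.
move=> r1_irr [_ C_max] T_hom u.
have [->|T_neq0] := eqVneq T 0; first by rewrite mul0mx mem0v.
pose fT := linfun (mulmx T : 'cV[F]_m -> 'cV[F]_n).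
have fTE v : fT v = T *m v by rewrite lfunE.
have full_stable : stable_sp H (mxact r1) fullv by move=> *; apply: memvf.
have fT_hom : is_hom H (mxact r1) fullv (mxact r2) fullv fT.
  by split=> [|x v xH _]; rewrite ?subvf // !fTE /mxact !mulmxA T_hom.
have fT_stable : stable_sp H (mxact r2) (fT @: fullv).
  move=> x _ xH /memv_imgP[v _ ->].
  by rewrite /mxact fTE mulmxA -T_hom // -mulmxA -fTE memv_img ?memvf.
have fT_neq0 : (fT @: fullv != 0)%VS.
  apply: contra T_neq0; rewrite -lkerE => /subvP ker_full; apply/eqP.
  apply: (mulmx_extr (ltn0Sn 0)) => v; have := ker_full v (memvf v).
  by rewrite memv_ker fTE mul0mx => /eqP.
have fT_iso :=
  irr_mod_hom_iso full_stable r1_irr (fun x _ => mulmx0 _ (r2 x)) fT_hom fT_neq0.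
have := C_max _ (subvf _) fT_stable (iso_mod_sym full_stable fT_iso).
by move/subvP; apply; rewrite -fTE memv_img ?memvf.
Qed.

Section TensorSubspace.
Variables (F : fieldType) (m n : nat).
Implicit Types (M : {vspace 'cV[F]_m}) (W : {vspace 'cV[F]_n}).

Lemma mem_tens_sp M W v w : v \in M -> w \in W -> v *m w^T \in tens_sp M W.
Proof.
move=> vM wW.
have vb_w v' : v' \in vbasis M -> v' *m w^T \in tens_sp M W.
  move=> v'b; rewrite (coord_vbasis wW) linear_sum mulmx_sumr /=.
  apply: memv_suml => j _.
  rewrite linearZ /= -scalemxAr; apply/memvZ/memv_span/allpairsP.
  by exists (v', (vbasis W)`_j); split; rewrite ?mem_nth ?size_tuple.
rewrite (coord_vbasis vM) mulmx_suml; apply: memv_suml => i _.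
by rewrite -scalemxAl memvZ ?vb_w ?mem_nth ?size_tuple.
Qed.

Lemma tens_sp_ind M W (P : 'M[F]_(m, n) -> Prop) :
  P 0 -> (forall k X Y, P X -> P Y -> P (k *: X + Y)) ->
  (forall v w, v \in M -> w \in W -> P (v *m w^T)) ->
  forall X, X \in tens_sp M W -> P X.
Proof.
move=> P0 PP Pout; apply: span_ind => // _ /allpairsP[[v w] /= [vb wb ->]].
by apply: Pout; apply: vbasis_mem.
Qed.

Lemma tens_sp0l W : tens_sp (0 : {vspace 'cV[F]_m}) W = 0%VS.
Proof.
apply/eqP; rewrite -subv0; apply/subvP; apply: tens_sp_ind => [|k X Y PX PY|v w].
- exact: mem0v.
- by rewrite memvD ?memvZ.
- by rewrite memv0 => /eqP-> _; rewrite mul0mx mem0v.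
Qed.

Lemma tens_spSl M1 M2 W : (M1 <= M2)%VS -> (tens_sp M1 W <= tens_sp M2 W)%VS.
Proof.
move=> sM12; apply/subvP; apply: tens_sp_ind => [|k X Y PX PY|v w vM1 wW].
- exact: mem0v.
- by rewrite memvD ?memvZ.
- by rewrite mem_tens_sp ?(subvP sM12).
Qed.

Lemma tens_spDl M1 M2 W : tens_sp (M1 + M2) W = (tens_sp M1 W + tens_sp M2 W)%VS.
Proof.
apply/eqP; rewrite eqEsubv subv_add !tens_spSl ?addvSl ?addvSr ?andbT //.
apply/subvP; apply: tens_sp_ind => [|k X Y PX PY|_ w /memv_addP[v1 v1M [v2 v2M ->]] wW].
- exact: mem0v.
- by rewrite memvD ?memvZ.
- by rewrite mulmxDl memv_add ?mem_tens_sp.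
Qed.

Lemma tens_sp_full_mulmx p (T : 'M[F]_(m, p)) (X : 'M[F]_(p, n)) M :
  (forall u, T *m u \in M) -> T *m X \in tens_sp M fullv.
Proof.
move=> TM; elim/outer_prod_ind: X => [|k X Y PX PY|u w].
- by rewrite mulmx0 mem0v.
- by rewrite mulmxDr -scalemxAr memvD ?memvZ.
- by rewrite mulmxA mem_tens_sp ?memvf.
Qed.

End TensorSubspace.

Lemma tens_act_linear (F : fieldType) (gT : finGroupType) (Q N : {set gT}) m n
    (rU : gT -> 'M[F]_m) (rW : gT -> 'M[F]_n) x :
  linear (tens_act Q N rU rW x).
Proof. by move=> k X Y; rewrite /tens_act mulmxDr mulmxDl -!scalemxAr -scalemxAl. Qed.

HB.instance Definition _ (F : fieldType) (gT : finGroupType) (Q N : {set gT}) m n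
    (rU : gT -> 'M[F]_m) (rW : gT -> 'M[F]_n) x :=
  GRing.isLinear.Build F _ _ *:%R (tens_act Q N rU rW x) (tens_act_linear Q N rU rW x).

HB.instance Definition _ (F : fieldType) (gT : finGroupType) (H : {group gT})
    (Q N : {set gT}) m n
    (rU : gT -> 'M[F]_m) (rW : gT -> 'M[F]_n) g :=
  GRing.isLinear.Build F _ _ *:%R (elem_ind H (tens_act Q N rU rW) g)
    (elem_ind_linear H (tens_act_linear Q N rU rW) g).

Section SemidirectTensor.
Variables (F : fieldType) (gT : finGroupType) (G Q N : {group gT}).
Hypothesis QN_G : (N ><| Q)%g = G.

Lemma sdprod_normal : Q \subset 'N(N)%g.
Proof. by case: (sdprod_context QN_G). Qed.

Lemma sdprod_tI : (Q :&: N = 1)%g.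
Proof. by case: (sdprod_context QN_G) => _ _ _ _; rewrite setIC. Qed.

Lemma sdprod_normG : G \subset 'N(N)%g.
Proof. by case: (sdprod_context QN_G) => /andP[]. Qed.

Lemma sdprod_joinG (H : {group gT}) : H \subset Q -> (H <*> N)%G \subset G.
Proof.
case: (sdprod_context QN_G) => /andP[sNG _] sQG _ _ _ sHQ.
by rewrite join_subG (subset_trans sHQ sQG) sNG.
Qed.

Lemma sdprod_mulgE : G :=: (Q * N)%g.
Proof. by case: (sdprod_context QN_G) => _ _ <- _ _; rewrite (normC sdprod_normal). Qed.

Lemma sdprod_joinE (H : {group gT}) :
  H \subset Q -> (H <*> N)%G = (H * N)%g :> {set gT}.
Proof. by move=> sHQ; apply: norm_joinEl; apply: subset_trans sHQ sdprod_normal. Qed.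

Lemma divgrM x y : x \in (Q * N)%g -> y \in (Q * N)%g ->
  divgr Q N (x * y) = (divgr Q N x * divgr Q N y)%g.
Proof.
case/mulsgP => q1 n1 q1Q n1N ->; case/mulsgP => q2 n2 q2Q n2N ->.
have -> : (q1 * n1 * (q2 * n2) = q1 * q2 * (n1 ^ q2 * n2))%g.
  by rewrite conjgE !mulgA mulgK.
have n12N : (n1 ^ q2 * n2)%g \in N.
  by rewrite groupM // memJ_norm ?(subsetP sdprod_normal).
have q12Q : (q1 * q2)%g \in Q by rewrite groupM.
by rewrite !(divgrMid sdprod_tI).
Qed.

Lemma mem_divgr (H : {group gT}) x : H \subset Q -> x \in (H * N)%g -> divgr Q N x \in H.
Proof.
by move=> sHQ /mulsgP[q n qH nN ->]; rewrite (divgrMid sdprod_tI) ?(subsetP sHQ).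
Qed.

Lemma divgr_norm n : n \in N -> divgr Q N n = 1%g.
Proof. by move=> nN; rewrite -[n]mul1g (divgrMid sdprod_tI). Qed.

Variables (b : nat) (E : {group gT}) (rWe : mx_representation F E b).
Variable rW : gT -> 'M[F]_b.
Hypothesis rWe_N : {in N, forall n, rWe n = rW n}.

Section TensorAction.
Variables (H : {group gT}) (m : nat) (r : mx_representation F H m).
Hypotheses (sHQ : H \subset Q) (sHNE : (H <*> N)%G \subset E).

Lemma tens_actM : {in (H <*> N)%G &, forall h1 h2 X,
  tens_act Q N r rWe (h1 * h2)%g X = tens_act Q N r rWe h1 (tens_act Q N r rWe h2 X)}.
Proof.
move=> h1 h2 h1HN h2HN X.
have [h1E h2E] := (subsetP sHNE _ h1HN, subsetP sHNE _ h2HN).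
rewrite sdprod_joinE // in h1HN h2HN.
have sHNQN : (H * N \subset Q * N)%g by rewrite mulSg.
rewrite /tens_act divgrM ?(subsetP sHNQN) // (repr_mxM r) ?mem_divgr //.
by rewrite (repr_mxM rWe) // trmx_mul !mulmxA.
Qed.

Lemma tens_actN : {in N, forall n X, tens_act Q N r rWe n X = X *m (rW n)^T}.
Proof. by move=> n nN X; rewrite /tens_act divgr_norm // repr_mx1 mul1mx rWe_N. Qed.

End TensorAction.

Lemma tens_act_hom (H : {group gT}) m1 m2 (r1 : gT -> 'M[F]_m1)
    (r2 : gT -> 'M[F]_m2) (T : 'M[F]_(m2, m1)) :
  (0 < b)%N -> H \subset Q -> (H <*> N)%G \subset E ->
  (forall k X, k \in (H <*> N)%G ->
     T *m tens_act Q N r1 rWe k X = tens_act Q N r2 rWe k (T *m X))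
  <-> {in H, forall x, T *m r1 x = r2 x *m T}.
Proof.
move=> b_gt0 sHQ sHNE; split => [T_hom x xH | T_hom k X].
  have xHN : x \in (H <*> N)%G by rewrite mem_gen ?inE ?xH.
  have rWe_unit : (rWe x)^T \in unitmx.
    by rewrite unitmx_tr repr_mx_unit ?(subsetP sHNE).
  apply: (mulmx_extr b_gt0) => Y; have := T_hom x (Y *m invmx (rWe x)^T) xHN.
  by rewrite /tens_act divgr_id ?(subsetP sHQ) // !mulmxA !(mulmxKV rWe_unit).
rewrite sdprod_joinE // => kHN; have dkH := mem_divgr sHQ kHN.
by rewrite /tens_act !mulmxA T_hom.
Qed.

End SemidirectTensor.

Section Main.
Variables (F : closedFieldType) (gT : finGroupType) (G Q N Q1 Q2 : {group gT}).
Hypothesis F_char0 : [pchar F] =i pred0.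
Hypothesis QN_G : (N ><| Q)%g = G.
Variables (a b c : nat) (rW : mx_representation F N b).
Hypothesis rW_irr : irr_mod N (mxact rW) fullv.
Hypothesis sQ1Q : Q1 \subset Q.
Hypothesis Q2_stab : forall q, q \in Q2 <-> q \in Q /\ mxrep_iso N (fun n => rW (n ^ q)%g) rW.
Variable rWe : mx_representation F (Q2 <*> N)%g b.
Hypothesis rWe_N : forall n, n \in N -> rWe n = rW n.

Local Notation Q3 := (Q1 :&: Q2)%G.
Local Notation Q1N := (Q1 <*> N)%G.
Local Notation Q2N := (Q2 <*> N)%G.
Local Notation Q3N := (Q3 <*> N)%G.
Local Notation conj_intertw y L := (forall n, n \in N -> L *m rW n = rW (n ^ y)%g *m L).

Lemma card_neq0 (H : {group gT}) : (#|H|%:R : F) != 0.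
Proof. by move/pcharf0P: F_char0 => ->; rewrite -lt0n cardG_gt0. Qed.

Lemma sQ2Q : Q2 \subset Q.
Proof. by apply/subsetP => q /Q2_stab[]. Qed.

Lemma joinSN (H1 H2 : {group gT}) : H1 \subset H2 -> (H1 <*> N)%G \subset (H2 <*> N)%G.
Proof. by move=> sH12; rewrite genS // setSU. Qed.

Lemma mem_Q2 q m L : q \in Q -> m \in N -> L \in unitmx ->
  conj_intertw (q * m)%g L -> q \in Q2.
Proof.
move=> qQ mN L_unit L_intertw; apply/Q2_stab; split => //.
exists (rW m *m L); first by rewrite unitmx_mul repr_mx_unit.
move=> n nN; have nqN : (n ^ q)%g \in N.
  by rewrite memJ_norm ?(subsetP (sdprod_normal QN_G)).
rewrite -mulmxA L_intertw // conjgM conjgE.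
rewrite (repr_mxM rW (groupVr mN) (groupM nqN mN)) (repr_mxM rW nqN mN).
by rewrite repr_mxV // !mulmxA mulmxV ?repr_mx_unit // mul1mx.
Qed.

Lemma mem_stab_join (H : {group gT}) y L : H \subset Q -> y \in (H <*> N)%G ->
  L \in unitmx -> conj_intertw y L -> y \in ((H :&: Q2)%G <*> N)%G.
Proof.
move=> sHQ; rewrite !(sdprod_joinE QN_G) ?(subset_trans (subsetIl _ _) sHQ) //.
case/mulsgP => q m qH mN -> L_unit L_intertw.
by rewrite mem_mulg // inE qH (mem_Q2 (subsetP sHQ _ qH) mN L_unit L_intertw).
Qed.

Lemma mem_stab_G y L : y \in G -> L \in unitmx -> conj_intertw y L -> y \in Q2N.
Proof.
rewrite (sdprod_mulgE QN_G) -(sdprod_joinE QN_G) // => yQN L_unit L_intertw.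
have QQ2 : (Q :&: Q2)%G = Q2 by apply: val_inj; rewrite /= (setIidPr sQ2Q).
by have := mem_stab_join (subxx Q) yQN L_unit L_intertw; rewrite QQ2.
Qed.

Lemma ind_tens_irr (H K : {group gT}) m (r : mx_representation F H m) :
  H \subset Q2 -> (H <*> N)%G \subset K -> K \subset G ->
  (forall y L, y \in K -> L \in unitmx -> conj_intertw y L -> y \in (H <*> N)%G) ->
  irr_mod H (mxact r) fullv ->
  irr_mod K (@ind_act F gT _) (ind_sp (H <*> N)%G (tens_act Q N r rWe) K fullv).
Proof.
move=> sHQ2 sHNK sKG K_stab r_irr.
have sHQ := subset_trans sHQ2 sQ2Q; have sHNQ2N := joinSN sHQ2.
have tM := tens_actM QN_G rWe r sHQ sHNQ2N; have tN := tens_actN QN_G rWe_N r.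
have [m_gt0 b_gt0] := (irr_mod_dim_gt0 r_irr, irr_mod_dim_gt0 rW_irr).
have tlin := tens_act_linear Q N r rWe.
apply: irr_mod_of_End_scalar; [exact: card_neq0 | | exact: (ind_sp_stable tlin) |].
  pose x : 'M[F]_(m, b) := delta_mx (Ordinal m_gt0) (Ordinal b_gt0).
  apply: (ind_sp_neq0 _ tlin _ (x := x)); rewrite ?memvf //.
    by rewrite tN // repr_mx1 trmx1 mulmx1.
  apply/eqP => /matrixP/(_ (Ordinal m_gt0) (Ordinal b_gt0)).
  by rewrite !mxE !eqxx => /eqP; rewrite oner_eq0.
move=> S S_hom.
have [T [T_hom T_ind]] := mx_of_ind_hom rW_irr (joing_subr _ _) sHNK (subxx _) sHNK
  (subset_trans sKG (sdprod_normG QN_G)) tlin tlin tM tM tN tN K_stab S_hom.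
have T_r := (tens_act_hom QN_G rWe r r T b_gt0 sHQ sHNQ2N).1 T_hom.
have [l Tl] := irr_mod_Schur_scalar r_irr T_r.
exists l; apply: ind_sp_ind => [|k f f' Pf Pf'|g X gK _].
- by rewrite linear0 scaler0.
- by rewrite linearP /= Pf Pf' scalerDr !scalerA mulrC.
- by rewrite T_ind // Tl mul_scalar_mx linearZ.
Qed.

Variable rU : mx_representation F (Q1 :&: Q2)%g a.
Hypothesis rU_irr : irr_mod (Q1 :&: Q2)%g (mxact rU) fullv.
Variable rV : mx_representation F Q2 c.
Hypothesis rV_irr : irr_mod Q2 (mxact rV) fullv.

Local Notation tU := (tens_act Q N rU rWe).
Local Notation tV := (tens_act Q N rV rWe).
Local Notation tU_linear := (tens_act_linear Q N rU rWe).
Local Notation tV_linear := (tens_act_linear Q N rV rWe).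
Local Notation Ut := (ind_sp Q3N tU Q1N fullv).
Local Notation Vt := (ind_sp Q2N tV G fullv).
Local Notation homUV := 'Hom({ffun gT -> 'M[F]_(a, b)}, {ffun gT -> 'M[F]_(c, b)}).
Local Notation induced T S := (induced_by Q1N Q3N Q2N tU tV T S).
Local Notation homS S := (is_hom Q1N (@ind_act F gT _) Ut (@ind_act F gT _) Vt S).

Lemma sQ3Q : Q3 \subset Q.
Proof. exact: subset_trans (subsetIl _ _) sQ1Q. Qed.

Lemma Ut_irr : irr_mod Q1N (@ind_act F gT _) Ut.
Proof.
apply: ind_tens_irr (subsetIr _ _) (joinSN (subsetIl _ _)) (sdprod_joinG QN_G sQ1Q) _ rU_irr.
by move=> y L; apply: mem_stab_join.
Qed.

Lemma Vt_irr : irr_mod G (@ind_act F gT _) Vt.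
Proof. exact: ind_tens_irr (sdprod_joinG QN_G sQ2Q) (subxx G) mem_stab_G rV_irr. Qed.

Lemma tUV_hom T :
  (forall k X, k \in Q3N -> T *m tU k X = tV k (T *m X)) <->
  {in Q3, forall x, T *m rU x = rV x *m T}.
Proof.
exact (tens_act_hom QN_G rWe rU rV T (irr_mod_dim_gt0 rW_irr) sQ3Q (joinSN (subsetIr _ _))).
Qed.

Lemma induced_outer T (S : homUV) :
  (forall g (u : 'cV_a) (w : 'cV_b), g \in Q1N ->
     S (elem_ind Q3N tU g (u *m w^T)) = elem_ind Q2N tV g ((T *m u) *m w^T)) ->
  induced T S.
Proof.
move=> S_outer g X gQ1N; elim/outer_prod_ind: X => [|k X Y SX SY|u w].
- by rewrite mulmx0 !linear0.
- by rewrite !linearP /= SX SY.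
- by rewrite S_outer // mulmxA.
Qed.

Lemma induced_uniq T (S S' : homUV) : induced T S -> induced T S' -> {in Ut, S =1 S'}.
Proof.
move=> TS TS'; apply: ind_sp_ind => [|k f f' Sf Sf'|g X gQ1N _].
- by rewrite !linear0.
- by rewrite !linearP /= Sf Sf'.
- by rewrite TS // TS'.
Qed.

Lemma induced_inj T T' (S : homUV) : induced T S -> induced T' S -> T = T'.
Proof.
move=> TS T'S; apply: (mulmx_extr (irr_mod_dim_gt0 rW_irr)) => X.
have /ffunP/(_ 1%g) := etrans (esym (TS 1%g X (group1 _))) (T'S 1%g X (group1 _)).
by rewrite !ffunE mulg1 invg1 group1 !(tens_actN QN_G rWe_N) // repr_mx1 trmx1 !mulmx1.
Qed.

Lemma induced_exists T : {in Q3, forall x, T *m rU x = rV x *m T} ->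
  exists S, homS S /\ induced T S.
Proof.
move/tUV_hom => T_hom.
exact: (ind_hom_of_mx (joinSN (subsetIr _ _)) (sdprod_joinG QN_G sQ1Q) tV_linear
  (tens_actM QN_G rWe rV sQ2Q (subxx _)) (card_neq0 _) T_hom).
Qed.

Lemma induced_surj (S : homUV) :
  homS S -> exists T, {in Q3, forall x, T *m rU x = rV x *m T} /\ induced T S.
Proof.
move=> S_hom; have sQ3NQ2N := joinSN (subsetIr Q1 Q2).
have [T [/tUV_hom T_hom TS]] := mx_of_ind_hom rW_irr (joing_subr _ _) (joinSN (subsetIl _ _))
  sQ3NQ2N (sdprod_joinG QN_G sQ2Q) (sdprod_normG QN_G) tU_linear tV_linear
  (tens_actM QN_G rWe rU sQ3Q sQ3NQ2N)
  (tens_actM QN_G rWe rV sQ2Q (subxx _)) (tens_actN QN_G rWe_N rU) (tens_actN QN_G rWe_N rV)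
  mem_stab_G S_hom.
by exists T.
Qed.

Local Notation IndQ1 M := (ind_sp Q2N tV Q1N (tens_sp M fullv)).

Lemma IndQ1_sum (s : seq {vspace 'cV[F]_c}) :
  IndQ1 (\sum_(X <- s) X) = (\sum_(X <- s) IndQ1 X)%VS.
Proof.
apply: (big_morph (fun M => IndQ1 M)) => [M M'|].
  by rewrite tens_spDl (ind_spD _ tV_linear).
by rewrite tens_sp0l (ind_sp0 _ tV_linear).
Qed.

Lemma IndQ1_neq0 (X : {vspace 'cV[F]_c}) : X != 0%VS -> IndQ1 X != 0%VS.
Proof.
pose w0 : 'cV[F]_b := delta_mx (Ordinal (irr_mod_dim_gt0 rW_irr)) 0.
have w0K : w0^T *m w0 = 1.
  by rewrite trmx_delta mul_delta_mx; apply/matrixP => i j; rewrite !ord1 !mxE.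
move=> X_neq0; apply: (ind_sp_neq0 _ tV_linear _ (x := vpick X *m w0^T)).
- by rewrite (tens_actN QN_G rWe_N) // repr_mx1 trmx1 mulmx1.
- by rewrite mem_tens_sp ?memv_pick ?memvf.
apply: contra X_neq0 => /eqP/(congr1 (mulmx^~ w0)).
by rewrite -mulmxA w0K mulmx1 mul0mx -vpick0 => ->.
Qed.

Lemma IndQ1_iso (X : {vspace 'cV[F]_c}) : stable_sp Q3 (mxact rV) X ->
  iso_mod Q3 (mxact rV) X (mxact rU) fullv ->
  iso_mod Q1N (@ind_act F gT _) (IndQ1 X) (@ind_act F gT _) Ut.
Proof.
move=> X_stable /(iso_mod_sym X_stable)[g [[_ g_hom] gU dimg]].
have [T gE] := lfun_cV_mulmx g.
have T_hom : {in Q3, forall x, T *m rU x = rV x *m T}.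
  move=> x xQ3; apply: (mulmx_extr (ltn0Sn 0)) => u.
  by rewrite -!mulmxA -!gE -[rU x *m u]/(mxact rU x u) g_hom ?memvf.
have TX u : T *m u \in X by rewrite -gE -gU memv_img ?memvf.
have [S [[_ S_act] TS]] := induced_exists T_hom.
have Ut_stable : stable_sp Q1N (@ind_act F gT _) Ut.
  exact: (ind_sp_stable tU_linear).
have SUt : (S @: Ut)%VS = IndQ1 X.
  apply/eqP; rewrite eqEsubv; apply/andP; split; apply/subvP.
    move=> _ /memv_imgP[f fU ->]; move: f fU.
    apply: ind_sp_ind => [|k f f' Sf Sf'|h Y hQ1N _].
    - by rewrite linear0 mem0v.
    - by rewrite linearP memvD ?memvZ.
    - by rewrite TS // (mem_ind_sp _ tV_linear) ?tens_sp_full_mulmx.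
  apply: ind_sp_ind => [|k f f' Sf Sf'|h Y hQ1N]; rewrite ?mem0v ?memvD ?memvZ //.
  move: Y; apply: tens_sp_ind => [|k Y Z SY SZ|v w]; first by rewrite linear0 mem0v.
    by rewrite linearP memvD ?memvZ.
  rewrite -gU => /memv_imgP[u _ ->] _; rewrite gE -mulmxA -TS //.
  by rewrite memv_img ?(mem_ind_sp _ tU_linear) ?memvf.
have SUt_neq0 : (S @: Ut != 0)%VS.
  rewrite SUt IndQ1_neq0 // -gU -dimv_eq0 dimg dimvf dim_matrix mulr1 -lt0n.
  exact: irr_mod_dim_gt0 rU_irr.
have S_hom : is_hom Q1N (@ind_act F gT _) Ut (@ind_act F gT _) (S @: Ut) S.
  by split; rewrite ?subvv.
have := irr_mod_hom_iso Ut_stable Ut_irr (fun x _ => linear0 (ind_act x)) S_hom SUt_neq0.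
by move/(iso_mod_sym Ut_stable); rewrite SUt.
Qed.

Lemma IndQ1_isotypic (VU : {vspace 'cV[F]_c}) :
  is_isotypic Q3 (mxact rV) fullv (mxact rU) fullv VU ->
  is_isotypic Q1N (@ind_act F gT _) Vt (@ind_act F gT _) Ut (IndQ1 VU).
Proof.
move=> VU_isotypic; have [[s [s_iso VU_sum]] _] := VU_isotypic; split.
  exists [seq IndQ1 X | X <- s]; split; last by rewrite VU_sum big_map IndQ1_sum.
  move=> _ /mapP[X Xs ->]; have [_ X_stable X_iso] := s_iso X Xs; split.
  - by apply: (ind_spS _ tV_linear); rewrite ?subvf ?(sdprod_joinG QN_G sQ1Q).
  - exact: (ind_sp_stable tV_linear).
  - exact: IndQ1_iso.
move=> Y sYVt Y_stable /(iso_mod_sym Y_stable)[g [[_ g_act] gUt _]].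
have [T [T_hom Tg]] : exists T, {in Q3, forall x, T *m rU x = rV x *m T} /\ induced T g.
  by apply: induced_surj; split; rewrite ?gUt.
have TVU := mxhom_in_isotypic rU_irr VU_isotypic T_hom.
rewrite -gUt; apply/subvP => _ /memv_imgP[f fUt ->]; move: f fUt.
apply: ind_sp_ind => [|k f f' gf gf'|h X hQ1N _].
- by rewrite linear0 mem0v.
- by rewrite linearP memvD ?memvZ.
- by rewrite Tg // (mem_ind_sp _ tV_linear) ?tens_sp_full_mulmx.
Qed.

End Main.

Theorem lemma2p9 (F : closedFieldType) (gT : finGroupType)
  (G Q N Q1 Q2 : {group gT})
  (hchar : [pchar F] =i pred0)
  (hG : (N ><| Q)%g = G)
  (a b c : nat)
  (rW : mx_representation F N b)
  (hWirr : irr_mod N (mxact rW) fullv)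
  (hQ1 : Q1 \subset Q)
  (hQ2 : forall q, q \in Q2 <-> q \in Q /\ mxrep_iso N (fun n => rW (n ^ q)%g) rW)
  (rWe : mx_representation F (Q2 <*> N)%g b)
  (hWe : forall n, n \in N -> rWe n = rW n)
  (rU : mx_representation F (Q1 :&: Q2)%g a)
  (hUirr : irr_mod (Q1 :&: Q2)%g (mxact rU) fullv)
  (rV : mx_representation F Q2 c)
  (hVirr : irr_mod Q2 (mxact rV) fullv) :
  let Q3 := (Q1 :&: Q2)%G in
  let Q1N := (Q1 <*> N)%G in
  let Q2N := (Q2 <*> N)%G in
  let Q3N := (Q3 <*> N)%G in
  let tU := tens_act Q N rU rWe in
  let tV := tens_act Q N rV rWe in
  let Ut := ind_sp Q3N tU Q1N fullv in
  let Vt := ind_sp Q2N tV G fullv in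
  let homT := fun T : 'M[F]_(c, a) =>
    forall x, x \in Q3 -> T *m rU x = rV x *m T in
  let tilde := fun (T : 'M[F]_(c, a))
      (S : 'Hom({ffun gT -> 'M[F]_(a, b)}, {ffun gT -> 'M[F]_(c, b)})) =>
    forall g (u : 'cV[F]_a) (w : 'cV[F]_b), g \in Q1N ->
      S (elem_ind Q3N tU g (u *m w^T)) = elem_ind Q2N tV g ((T *m u) *m w^T) in
  let homS := is_hom Q1N (@ind_act F gT _) Ut (@ind_act F gT _) Vt in
  [/\ irr_mod Q1N (@ind_act F gT _) Ut,
      irr_mod G (@ind_act F gT _) Vt,
      (* T |-> T~ is well defined (unique on Ut) and lands in the Hom space *)
      ((forall T, homT T -> exists S, homS S /\ tilde T S)
      /\ (forall T S S', homT T -> tilde T S -> tilde T S' ->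
            forall f, f \in Ut -> S f = S' f)),
      (* injective and surjective *)
      (forall T T' S, homT T -> homT T' -> tilde T S -> tilde T' S -> T = T')
      /\ (forall S, homS S -> exists T, homT T /\ tilde T S)
    & (* isotypic components *)
      forall VU : {vspace 'cV[F]_c},
        is_isotypic Q3 (mxact rV) fullv (mxact rU) fullv VU ->
        is_isotypic Q1N (@ind_act F gT _) Vt (@ind_act F gT _) Ut
          (ind_sp Q2N tV Q1N (tens_sp VU fullv))].
Proof.
move=> Q3 Q1N Q2N Q3N tU tV Ut Vt homT tilde homS.
have tildeP T S : tilde T S <-> induced_by Q1N Q3N Q2N tU tV T S.
  split=> [|TS g u w gQ1N]; first exact: induced_outer.
  by rewrite TS // mulmxA.
split.
- exact: (Ut_irr hchar hG hWirr hQ1 hQ2 hWe hUirr).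
- exact: (Vt_irr hchar hG hWirr hQ2 hWe hVirr).
- split=> [T /(induced_exists hchar hG hWirr hQ1 hQ2 rWe)[S [S_hom TS]]|].
    by exists S; split; last apply/tildeP.
  by move=> T S S' _ /tildeP TS /tildeP TS'; apply: induced_uniq TS TS'.
- split=> [T T' S _ _ /tildeP TS /tildeP T'S|S].
    exact: (induced_inj hG hWirr hWe TS T'S).
  case/(induced_surj hG hWirr hQ1 hQ2 hWe) => T [T_hom TS].
  by exists T; split; last apply/tildeP.
- exact: (IndQ1_isotypic hchar hG hWirr hQ1 hQ2 hWe hUirr).
Qed.
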